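(* Assume $\min\{d_1,\dots,d_{L-1}\}\ge d_{\min}$. Let $(\bm\sigma,\bm\Pi)\in\mathcal B$ and $(\bm\sigma',\bm\Pi')\in\mathcal B$ be arbitrary. Then (i) $\mathcal W_{(\bm\sigma,\bm\Pi)}=\mathcal W_{(\bm\sigma',\bm\Pi')}$ if and only if $\bm\sigma=\bm\sigma'$; (ii) if $\bm\sigma\ne\bm\sigma'$, then $\mathrm{dist}(\mathcal W_{(\bm\sigma,\bm\Pi)},\mathcal W_{(\bm\sigma',\bm\Pi')})\ge\delta_\sigma$.
   Context: Let $L\ge2$, $d_0,\dots,d_L$ positive integers, $d_{\min}=\min\{d_0,d_L\}$, $\lambda>0$, and $y_1\ge\dots\ge y_{d_{\min}}\ge0$. Let $r_Y$ be the number of positive $y_i$, $p_Y$ the number of distinct positive values, $0=s_0<s_1<\dots<s_{p_Y}=r_Y$ with $y_{s_{k-1}+1}=\dots=y_{s_k}>y_{s_k+1}$ (where $y_j=0$ for $j>r_Y$), $h_k=s_k-s_{k-1}$. $\mathcal O^n$: $n\times n$ orthogonal matrices; $\mathcal P^n$: $n\times n$ permutation matrices; $\mathrm{BlkD}$: block diagonal. Define $\mathcal A=\{\bm a\in\mathbb R^{d_{\min}}: a_i^{2L-1}-\sqrt\lambda y_ia_i^{L-1}+\lambda a_i=0,\ a_i\ge0\ \forall i\}$ and $\mathcal B=\{(\bm\sigma,\bm\Pi)\in\mathbb R^{d_{\min}}\times\mathcal P^{d_{\min}}:\exists\bm a\in\mathcal A,\ \bm\sigma=\bm\Pi\bm a,\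 \sigma_1\ge\dots\ge\sigma_{d_{\min}}\}$. For $(\bm\sigma,\bm\Pi)\in\mathcal B$, let $\bm\Sigma_l\in\mathbb R^{d_l\times d_{l-1}}$ have top-left $d_{\min}\times d_{\min}$ block $\mathrm{diag}(\bm\sigma)$ and zeros elsewhere, and let $\mathcal W_{(\bm\sigma,\bm\Pi)}$ be the set of tuples $\bm W=(\bm W_1,\dots,\bm W_L)$, $\bm W_l\in\mathbb R^{d_l\times d_{l-1}}$, for which there exist $\bm Q_l\in\mathcal O^{d_{l-1}}$ ($l=2,\dots,L$), $\bm O_k\in\mathcal O^{h_k}$ ($k\in[p_Y]$), $\bm O_{p_Y+1}\in\mathcal O^{d_0-r_Y}$, $\widehat{\bm O}_{p_Y+1}\in\mathcal O^{d_L-r_Y}$ with $\bm W_1=\bm Q_2\bm\Sigma_1\mathrm{BlkD}(\bm\Pi,\bm I_{d_0-d_{\min}})\mathrm{BlkD}(\bm O_1,\dots,\bm O_{p_Y+1})$, $\bm W_l=\bm Q_{l+1}\bm\Sigma_l\bm Q_l^T$ for $2\le l\le L-1$, and $\bm W_L=\mathrm{BlkD}(\bm O_1^T,\dots,\bm O_{p_Y}^T,\widehat{\bm O}_{p_Y+1}^T)\mathrm{BlkD}(\bm\Pi^T,\bm I_{d_L-d_{\min}})\bm\Sigma_L\bm Q_L^T$. Let $\mathcal Y=\bigcup_{i\in[d_{\min}]}\{\sigma\ge0:\sigma^{2L-1}+\lambda\sigma-\sqrt\lambda y_i\sigma^{L-1}=0\}$ and $\delta_\sigma=\min\{|x-y|:x\ne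 y\in\mathcal Y\}$. For sets, $\mathrm{dist}(\mathcal X,\mathcal X')=\inf_{\bm W\in\mathcal X,\bm W'\in\mathcal X'}(\sum_l\|\bm W_l-\bm W_l'\|_F^2)^{1/2}$. *)

From HB Require Import structures.
From mathcomp Require Import all_boot all_order all_algebra.
From mathcomp Require Import boolp classical_sets reals.
Set Implicit Arguments. Unset Strict Implicit. Unset Printing Implicit Defensive.
Import Order.TTheory GRing.Theory Num.Theory.
Local Open Scope ring_scope.
Local Open Scope classical_set_scope.

Section Defs.
Variable R : realType.

Definition extv (k : nat) (v : 'cV[R]_k) (i : nat) : R :=
  match (insub i : option 'I_k) with Some i' => v i' 0 | None => 0 end.

Definition orthogonal (n : nat) (Q : 'M[R]_n) : Prop := Q *m Q^T = 1%:M.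

Definition nonincr (k : nat) (v : 'cV[R]_k) : Prop :=
  forall i j : 'I_k, (i <= j)%N -> v j 0 <= v i 0.

Definition in_A (L k : nat) (lam : R) (y a : 'cV[R]_k) : Prop :=
  forall i : 'I_k,
    a i 0 ^+ (2 * L).-1 - Num.sqrt lam * y i 0 * a i 0 ^+ L.-1 + lam * a i 0 = 0
    /\ 0 <= a i 0.

Definition in_B (L k : nat) (lam : R) (y sigma : 'cV[R]_k) (Pi : 'M[R]_k) : Prop :=
  is_perm_mx Pi /\ (exists a, in_A L lam y a /\ sigma = Pi *m a) /\ nonincr sigma.

Definition Sig (m n k : nat) (sigma : 'cV[R]_k) : 'M[R]_(m, n) :=
  \matrix_(i < m, j < n) (if (i : nat) == j then extv sigma i else 0).

Definition extP (n k : nat) (P : 'M[R]_k) : 'M[R]_n :=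
  \matrix_(i < n, j < n)
    match (insub (i : nat) : option 'I_k), (insub (j : nat) : option 'I_k) with
    | Some i', Some j' => P i' j'
    | _, _ => ((i : nat) == j)%:R
    end.

(* O is block diagonal w.r.t. the partition of indices given by the blocks
   (s_{k-1}, s_k], k = 1..p_Y, of equal positive y-values, and the last block
   (r_Y, n]: indices i, j lie in the same block iff y_i = y_j (y extended by 0). *)
Definition blkdiag_y (n k : nat) (y : 'cV[R]_k) (O : 'M[R]_n) : Prop :=
  forall i j : 'I_n, extv y i != extv y j -> O i j = 0.

(* Tuples W = (W_1,...,W_L) with L = n.+2; W l is the paper's W_{l+1}. *)
Definition Wtuple (n : nat) (d : nat -> nat) :=
  forall l : 'I_n.+2, 'M[R]_(d l.+1, d l).

(* Q k stands for the paper's Q_{k+1} \in O^{d_k}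
   (k = 1..L-1); O = BlkD(O_1,...,O_{p_Y+1}), Oh = BlkD(O_1,...,O_{p_Y},Oh_{p_Y+1}),
   so Oh^T = BlkD(O_1^T,...,O_{p_Y}^T,Oh_{p_Y+1}^T). *)
Definition Wset (n : nat) (d : nat -> nat) (k : nat) (y sigma : 'cV[R]_k)
    (Pi : 'M[R]_k) : set (Wtuple n d) :=
  [set W : Wtuple n d | exists (Q : forall m : nat, 'M[R]_(d m)) (O : 'M[R]_(d 0%N))
             (Oh : 'M[R]_(d n.+2)),
     (forall m : nat, (1 <= m <= n.+1)%N -> orthogonal (Q m)) /\
     orthogonal O /\ orthogonal Oh /\ blkdiag_y y O /\ blkdiag_y y Oh /\
     [/\
         (forall (i j : 'I_(d 0%N)) (i' j' : 'I_(d n.+2)),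
             i = i' :> nat -> j = j' :> nat -> 0 < extv y i -> O i j = Oh i' j'),
        
         W ord0 = Q 1%N *m Sig (d 1%N) (d 0%N) sigma *m extP (d 0%N) Pi *m O,
         (forall l : 'I_n.+2, (0 < l < n.+1)%N ->
             W l = Q l.+1 *m Sig (d l.+1) (d l) sigma *m (Q l)^T) &
         W ord_max = Oh^T *m extP (d n.+2) Pi^T *m Sig (d n.+2) (d n.+1) sigma
                       *m (Q n.+1)^T]].

Definition fro2 (p q : nat) (A : 'M[R]_(p, q)) : R := \sum_i \sum_j A i j ^+ 2.

Definition wdist (n : nat) (d : nat -> nat) (W W' : Wtuple n d) : R :=
  Num.sqrt (\sum_(l < n.+2) fro2 (W l - W' l)).

Definition setdist (n : nat) (d : nat -> nat) (X Y : set (Wtuple n d)) : R :=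
  inf [set r : R | exists W, X W /\ exists W', Y W' /\ r = wdist W W'].

Definition Yset (L k : nat) (lam : R) (y : 'cV[R]_k) : set R :=
  [set s : R | 0 <= s /\ exists i : 'I_k,
      s ^+ (2 * L).-1 + lam * s - Num.sqrt lam * y i 0 * s ^+ L.-1 = 0].

Definition delta_sigma (L k : nat) (lam : R) (y : 'cV[R]_k) : R :=
  inf [set r : R | exists x z, Yset L lam y x /\ Yset L lam y z /\ x != z
                               /\ r = `|x - z|].

End Defs.

From Pilot Require Import Defs.
From HB Require Import structures.
From mathcomp Require Import all_boot all_order all_algebra.
From mathcomp Require Import classical_sets reals.
From mathcomp Require Import ring lra.
From mathcomp Require Import fingroup perm.
Import Pilot.Defs.
Import Order.TTheory GRing.Theory Num.Theory.
Set Implicit Arguments. Unset Strict Implicit. Unset Printing Implicit Defensive.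
Local Open Scope ring_scope.
Local Open Scope classical_set_scope.

(* The first factor of every point of W_(sigma,Pi) has the form U diag(sigma) V
   with U, V orthogonal, so Mirsky's inequality
   ||W_1 - W'_1||_F^2 >= sum_i (sigma_i - sigma'_i)^2 separates the sets for
   different sigma; it follows from von Neumann's trace inequality, proved by
   Abel summation against the doubly substochastic matrix of squared entries of
   the orthogonal factors.  A coordinate where sigma and sigma' differ gives two
   distinct points of Y, hence the bound delta_sigma.  Conversely, for equal
   sigma, Pi and Pi' differ by a permutation commuting with diag(sigma) and
   preserving the blocks of equal y, which is absorbed into Q_l, O and Oh. *)

Lemma perm_of_eq_fibres (T : eqType) k (f g : 'I_k -> T) :
  (forall c, \sum_(q < k) (f q == c) = \sum_(q < k) (g q == c))%N ->
  exists tau : 'S_k, forall q, g (tau q) = f q.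
Proof.
move=> fibres.
have countE (h : 'I_k -> T) c :
    count_mem c [tuple h q | q < k] = (\sum_(q < k) (h q == c))%N.
  by rewrite count_map -sum1_count big_mkcond big_enum.
have : perm_eq [tuple f q | q < k] [tuple g q | q < k].
  by apply/allP => c _ /=; rewrite !countE fibres.
case/tuple_permP => tau /val_inj tau_f; exists tau => q.
by have := congr1 (fun t => tnth t q) tau_f; rewrite !tnth_mktuple.
Qed.

(* Off the zero set of [sg] the two labellings agree; on it the fibres of
   [F \o s] and [F \o s'] have equal size, namely that of a fibre of [F] minus
   the (equal) part lying off the zero set. *)
Lemma perm_stab_relabel (T U : eqType) k (sg : 'I_k -> T) (z : T) (F : 'I_k -> U)
    (s s' : 'S_k) :
  (forall q, sg q != z -> F (s q) = F (s' q)) ->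
  exists tau : 'S_k, forall q, sg (tau q) = sg q /\ F (s' (tau q)) = F (s q).
Proof.
move=> agree.
suff [tau tauE] : exists tau : 'S_k,
    forall q, (sg (tau q), F (s' (tau q))) = (sg q, F (s q)).
  by exists tau => q; case: (tauE q).
apply: (@perm_of_eq_fibres _ k (fun q => (sg q, F (s q)))
  (fun q => (sg q, F (s' q)))) => -[v w].
have [->|vz] := eqVneq v z; last first.
  apply: eq_bigr => q _; rewrite !xpair_eqE.
  by have [sgq|//] := eqVneq (sg q) v; rewrite agree // sgq.
have zero_fibre (t : 'S_k) : (\sum_(q < k) ((sg q, F (t q)) == (z, w)) =
    \sum_(i < k) (F i == w) - \sum_(q < k) ((sg q != z) && (F (t q) == w)))%N.
  rewrite [X in (_ = X - _)%N](reindex_inj (@perm_inj _ t)) /=.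
  apply/eqP; rewrite -(eqn_add2r (\sum_(q < k) ((sg q != z) && (F (t q) == w)))).
  rewrite subnK; last by apply: leq_sum => q _; case: (sg q != z).
  rewrite -big_split /=; apply/eqP/eq_bigr => q _.
  by rewrite xpair_eqE; case: (sg q == z); case: (F (t q) == w).
have off_zero : (\sum_(q < k) ((sg q != z) && (F (s q) == w)) =
    \sum_(q < k) ((sg q != z) && (F (s' q) == w)))%N.
  by apply: eq_bigr => q _; have [//|nz] := eqVneq (sg q) z; rewrite /= agree.
by rewrite !zero_fibre off_zero.
Qed.

Lemma col_neq (T : eqType) k (u v : 'cV[T]_k) : u != v -> exists i, u i 0 != v i 0.
Proof.
move=> uv; apply/existsP; apply: contraR uv => /existsPn uv_eq.
by apply/eqP/matrixP => i j; rewrite ord1; apply/eqP; move: (uv_eq i); rewrite negbK.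
Qed.

Section AbelSummation.
Variable R : realDomainType.

Lemma ler_sum_prefix (p k : nat) (F : nat -> R) : (k <= p)%N ->
  (forall j, 0 <= F j) -> \sum_(j < k) F j <= \sum_(j < p) F j.
Proof.
move=> kp F0; rewrite (big_ord_widen _ _ kp) [leLHS]big_mkcond /=.
by apply: ler_sum => j _; case: ifP.
Qed.

(* Abel summation: peel off the smallest weight [a p] and recurse on [a - a p]. *)
Lemma ler_sum_nonincr_weights (p : nat) (a r s : nat -> R) :
  (forall i j, (i <= j < p)%N -> a j <= a i) ->
  (forall i, (i < p)%N -> 0 <= a i) ->
  (forall k, (k <= p)%N -> \sum_(i < k) r i <= \sum_(i < k) s i) ->
  \sum_(i < p) a i * r i <= \sum_(i < p) a i * s i.
Proof.
elim: p a => [|p IH] a a_nonincr a_ge0 prefix_le; first by rewrite !big_ord0.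
rewrite -subr_ge0 -sumrB.
have -> : \sum_(i < p.+1) (a i * s i - a i * r i) =
    \sum_(i < p) ((a i - a p) * s i - (a i - a p) * r i)
    + a p * \sum_(i < p.+1) (s i - r i).
  rewrite big_ord_recr /= mulr_sumr big_ord_recr /= addrA [RHS]addrA -big_split /=.
  by rewrite -addrA; congr (_ + _); [apply: eq_bigr => i _|]; ring.
apply: addr_ge0; last first.
  by apply: mulr_ge0; [exact: a_ge0 | rewrite sumrB subr_ge0; exact: prefix_le].
rewrite sumrB subr_ge0; apply: (IH (fun i => a i - a p)).
- move=> i j /andP [ij jp]; rewrite lerD2r; apply: a_nonincr.
  by rewrite ij ltnS ltnW.
- by move=> i ip; rewrite subr_ge0; apply: a_nonincr; rewrite ltnW /=.
- by move=> k kp; apply: prefix_le; apply: leqW.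
Qed.

(* Abel summation in [a], then in [b] against the indicator of [[0, k)]. *)
Lemma ler_sum_substochastic (p : nat) (a b : nat -> R) (D : nat -> nat -> R) :
  (forall i j, (i <= j < p)%N -> a j <= a i) -> (forall i, (i < p)%N -> 0 <= a i) ->
  (forall i j, (i <= j < p)%N -> b j <= b i) -> (forall i, (i < p)%N -> 0 <= b i) ->
  (forall i j, 0 <= D i j) ->
  (forall i, (i < p)%N -> \sum_(j < p) D i j <= 1) ->
  (forall j, (j < p)%N -> \sum_(i < p) D i j <= 1) ->
  \sum_(i < p) \sum_(j < p) a i * b j * D i j <= \sum_(i < p) a i * b i.
Proof.
move=> a_nonincr a_ge0 b_nonincr b_ge0 D_ge0 rows_le1 cols_le1.
have indicatorE m k (F : nat -> R) : (k <= m)%N ->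
    \sum_(j < m) F j * (j < k)%:R = \sum_(j < k) F j.
  move=> km; rewrite (big_ord_widen _ _ km) [RHS]big_mkcond /=.
  by apply: eq_bigr => j _; case: ifP; rewrite ?mulr1 ?mulr0.
have -> : \sum_(i < p) \sum_(j < p) a i * b j * D i j =
    \sum_(i < p) a i * \sum_(j < p) D i j * b j.
  by apply: eq_bigr => i _; rewrite mulr_sumr; apply: eq_bigr => j _; ring.
apply: (ler_sum_nonincr_weights (r := fun i => \sum_(j < p) D i j * b j)) => // k kp.
have -> : \sum_(i < k) \sum_(j < p) D i j * b j = \sum_(j < p) b j * \sum_(i < k) D i j.
  by rewrite exchange_big; apply: eq_bigr => j _; rewrite mulr_sumr;
    apply: eq_bigr => i _; rewrite mulrC.
rewrite -(indicatorE p k b kp).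
apply: (ler_sum_nonincr_weights (r := fun j => \sum_(i < k) D i j)
  (s := fun j => (j < k)%:R)) => // l lp.
have [lk|kl] := leqP l k.
  under [leRHS]eq_bigr => j _ do rewrite (leq_trans (ltn_ord j) lk).
  apply: ler_sum => j _; apply: le_trans (cols_le1 j (leq_trans (ltn_ord j) lp)).
  exact: (ler_sum_prefix (F := D^~ j)).
have -> : \sum_(j < l) ((j < k)%:R : R) = \sum_(j < k) 1.
  rewrite -(indicatorE l k (fun=> 1)) ?(ltnW kl) //.
  by apply: eq_bigr => j _; rewrite mul1r.
rewrite exchange_big /=; apply: ler_sum => i _.
apply: le_trans (rows_le1 i (leq_trans (ltn_ord i) kp)).
exact: (ler_sum_prefix (F := D i)).
Qed.

End AbelSummation.

Section Embedding.
Variable R : realType.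
Local Notation emb n p := (pid_mx p : 'M[R]_(n, p)).

Lemma pid_mx_colE n p (i : 'I_n) (l : 'I_p) :
  emb n p i l = ((i : nat) == l)%:R.
Proof. by rewrite mxE; case: eqP => // ->; rewrite ltn_ord. Qed.

Lemma tr_pid_mulmxE n p q (pn : (p <= n)%N) (M : 'M[R]_(n, q)) l b :
  ((emb n p)^T *m M) l b = M (widen_ord pn l) b.
Proof. by rewrite tr_pid_mx (pid_mxErow _ pn) mul_rowsub_mx mul1mx mxE. Qed.

Lemma mulmx_pidE n p q (pn : (p <= n)%N) (M : 'M[R]_(q, n)) a l :
  (M *m pid_mx p) a l = M a (widen_ord pn l).
Proof.
by rewrite -[M *m _]trmxK trmx_mul [LHS]mxE tr_pid_mulmxE mxE.
Qed.

Lemma pid_mulmxE n p q (M : 'M[R]_(p, q)) (i : 'I_n) b :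
  (emb n p *m M) i b =
  if insub (i : nat) is Some l then M l b else 0.
Proof.
rewrite mxE; case: insubP => [l _ il|ni].
  rewrite (bigD1 l) //= pid_mx_colE il eqxx mul1r big1 ?addr0 // => j jl.
  by rewrite pid_mx_colE -il (inj_eq val_inj) eq_sym (negbTE jl) mul0r.
rewrite big1 // => j _; rewrite pid_mx_colE; case: eqP => [ij|]; last by rewrite mul0r.
by move: ni; rewrite ij ltn_ord.
Qed.

Lemma mulmx_tr_pidE n p q (M : 'M[R]_(q, p)) a (j : 'I_n) :
  (M *m (emb n p)^T) a j =
  if insub (j : nat) is Some l then M a l else 0.
Proof.
rewrite -[M *m _]trmxK trmx_mul trmxK [LHS]mxE pid_mulmxE.
by case: insubP => [l _ _|_]; rewrite ?mxE.
Qed.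

Lemma tr_pid_mul_pid n p : (p <= n)%N ->
  (emb n p)^T *m emb n p = 1%:M.
Proof. by move=> pn; rewrite tr_pid_mx pid_mx_id // pid_mx_1. Qed.

Lemma extvE k (v : 'cV[R]_k) (i : 'I_k) : extv v i = v i 0.
Proof. by rewrite /extv valK. Qed.

Lemma Sig_pid m k p (sg : 'cV[R]_p) :
  Sig m k sg = emb m p *m diag_mx sg^T *m (emb k p)^T.
Proof.
apply/matrixP => i j; rewrite [LHS]mxE mulmx_tr_pidE /extv.
case: (insubP _ (j : nat)) => [l _ jl|nj].
  rewrite pid_mulmxE; case: (insubP _ (i : nat)) => [l' _ il'|ni].
    by rewrite !mxE -il' -jl (inj_eq val_inj); case: (l' == l); rewrite ?mulr1n.
  by case: eqP.
by case: eqP => // ij; case: insubP => // l _ il; move: nj; rewrite -ij -il ltn_ord.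
Qed.

Lemma extP_pid n p (T : 'M[R]_p) :
  extP n T = emb n p *m T *m (emb n p)^T + (1%:M - emb n p *m (emb n p)^T).
Proof.
apply/matrixP => i j; rewrite [LHS]mxE [RHS]mxE mulmx_tr_pidE.
rewrite [X in _ + X]mxE [X in _ + (_ + X)]mxE [X in _ + (X + _)]mxE mulmx_tr_pidE.
have ijE : (i == j) = ((i : nat) == j) by [].
case: (insubP _ (j : nat)) => [l' _ jl'|nj].
  rewrite pid_mulmxE !mxE ijE -jl'; case: (insubP _ (i : nat)) => [l _ il|ni].
    by rewrite -il ltn_ord andbT subrr addr0.
  by rewrite (negbTE ni) andbF subr0 add0r.
by case: insub; rewrite add0r subr0.
Qed.

Section ExtendByIdentity.
Variables (n p : nat) (pn : (p <= n)%N).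
Local Notation E := (emb n p).

Lemma extP_mul (A B : 'M[R]_p) : extP n A *m extP n B = extP n (A *m B).
Proof.
have EtE : E^T *m E = 1%:M by exact: tr_pid_mul_pid.
have EtEK q (Y : 'M[R]_(p, q)) : E^T *m (E *m Y) = Y by rewrite mulmxA EtE mul1mx.
rewrite !extP_pid mulmxDl !mulmxDr !mulmxN !mulmxDl !mulNmx !mulmx1 !mul1mx.
by rewrite -!mulmxA !EtEK !subrr !add0r !subr0 addr0.
Qed.

Lemma extP1 : extP n (1%:M : 'M[R]_p) = 1%:M.
Proof. by rewrite extP_pid mulmx1 addrC subrK. Qed.

Lemma tr_extP (A : 'M[R]_p) : (extP n A)^T = extP n A^T.
Proof. by rewrite !extP_pid linearD /= linearB /= trmx1 !trmx_mul trmxK mulmxA. Qed.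

Lemma extP_orth (A : 'M[R]_p) : orthogonal A -> orthogonal (extP n A).
Proof. by rewrite /orthogonal tr_extP extP_mul => ->; rewrite extP1. Qed.

Lemma extP_mul_pid (A : 'M[R]_p) : extP n A *m E = E *m A.
Proof.
rewrite extP_pid mulmxDl mulmxBl mul1mx -!mulmxA tr_pid_mul_pid // !mulmx1.
by rewrite subrr addr0.
Qed.

Lemma tr_pid_mul_extP (A : 'M[R]_p) : E^T *m extP n A = A *m E^T.
Proof.
rewrite extP_pid mulmxDr mulmxBr mulmx1 !mulmxA tr_pid_mul_pid // !mul1mx.
by rewrite subrr addr0.
Qed.

End ExtendByIdentity.

Lemma extP_Sig m k p (pm : (p <= m)%N) (pk : (p <= k)%N) (T : 'M[R]_p)
    (sg : 'cV[R]_p) :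
  T *m diag_mx sg^T = diag_mx sg^T *m T ->
  extP m T *m Sig m k sg = Sig m k sg *m extP k T.
Proof.
move=> TD; rewrite !Sig_pid !mulmxA extP_mul_pid // -!mulmxA tr_pid_mul_extP //.
by rewrite !mulmxA -(mulmxA (emb m p)) TD mulmxA.
Qed.

End Embedding.

Section Orthogonal.
Variable R : realType.

Lemma orthogonal_trmx_mul n (Q : 'M[R]_n) : orthogonal Q -> Q^T *m Q = 1%:M.
Proof. exact: mulmx1C. Qed.

Lemma orthogonalM n (A B : 'M[R]_n) :
  orthogonal A -> orthogonal B -> orthogonal (A *m B).
Proof. by move=> oA oB; rewrite /orthogonal trmx_mul mulmxA -(mulmxA A) oB mulmx1. Qed.

Lemma orthogonal_tr n (A : 'M[R]_n) : orthogonal A -> orthogonal A^T.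
Proof. by move=> oA; rewrite /orthogonal trmxK orthogonal_trmx_mul. Qed.

Lemma orthogonal1 n : orthogonal (1%:M : 'M[R]_n).
Proof. by rewrite /orthogonal trmx1 mulmx1. Qed.

Lemma orthogonal_perm_mx n (s : 'S_n) : orthogonal (perm_mx s : 'M[R]_n).
Proof. by rewrite /orthogonal tr_perm_mx -perm_mxM mulgV perm_mx1. Qed.

Lemma orthogonal_sum_sqr_row n (Z : 'M[R]_n) i : orthogonal Z -> \sum_j Z i j ^+ 2 = 1.
Proof.
move=> oZ; have := congr1 (fun M : 'M[R]_n => M i i) oZ; rewrite !mxE eqxx mulr1n => <-.
by apply: eq_bigr => j _; rewrite mxE expr2.
Qed.

Lemma orthogonal_sum_sqr_row_sub_le1 n p (pn : (p <= n)%N) (Z : 'M[R]_n) i :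
  orthogonal Z -> \sum_(j < p) mxsub (widen_ord pn) (widen_ord pn) Z i j ^+ 2 <= 1.
Proof.
move=> oZ; under eq_bigr do rewrite mxE.
rewrite -(orthogonal_sum_sqr_row (widen_ord pn i) oZ).
rewrite -(big_ord_narrow (F := fun j => Z (widen_ord pn i) j ^+ 2) pn).
by rewrite [leRHS](bigID (fun j : 'I_n => (j < p)%N)) /= lerDl sumr_ge0 // => j _; exact: sqr_ge0.
Qed.

Lemma orthogonal_sum_sqr_col_sub_le1 n p (pn : (p <= n)%N) (Z : 'M[R]_n) j :
  orthogonal Z -> \sum_(i < p) mxsub (widen_ord pn) (widen_ord pn) Z i j ^+ 2 <= 1.
Proof.
move/orthogonal_tr/(orthogonal_sum_sqr_row_sub_le1 pn j).
by rewrite -trmx_mxsub; under eq_bigr do rewrite mxE.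
Qed.

End Orthogonal.

(* Entries indexed by nat and padded with 0, like [extv], so that the
   nat-indexed summation lemmas above apply to matrices. *)
Definition extm (V : zmodType) m n (M : 'M[V]_(m, n)) (i j : nat) : V :=
  if insub i is Some i' then if insub j is Some j' then M i' j' else 0 else 0.

Section Mirsky.
Variable R : realType.
Local Notation emb n p := (pid_mx p : 'M[R]_(n, p)).

Lemma extmE m n (M : 'M[R]_(m, n)) (i : 'I_m) (j : 'I_n) : extm M i j = M i j.
Proof. by rewrite /extm !valK. Qed.

Lemma extv_nonincr p (v : 'cV[R]_p) : nonincr v ->
  forall i j, (i <= j < p)%N -> extv v j <= extv v i.
Proof.
move=> v_nonincr i j /andP [ij jp]; have ip := leq_ltn_trans ij jp.
by rewrite -[j]/(val (Ordinal jp)) -[i]/(val (Ordinal ip)) !extvE; apply: v_nonincr.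
Qed.

Lemma extv_ge0 p (v : 'cV[R]_p) : (forall i, 0 <= v i 0) -> forall i, 0 <= extv v i.
Proof. by move=> v_ge0 i; rewrite /extv; case: insubP. Qed.

Lemma fro2_mxtrace p q (M : 'M[R]_(p, q)) : fro2 M = \tr (M *m M^T).
Proof.
rewrite /fro2 /mxtrace; apply: eq_bigr => i _; rewrite mxE.
by apply: eq_bigr => j _; rewrite mxE expr2.
Qed.

Lemma fro2_ge0 p q (M : 'M[R]_(p, q)) : 0 <= fro2 M.
Proof. by apply: sumr_ge0 => i _; apply: sumr_ge0 => j _; apply: sqr_ge0. Qed.

Lemma fro2_0 p q : fro2 (0 : 'M[R]_(p, q)) = 0.
Proof. by rewrite /fro2 big1 // => i _; rewrite big1 // => j _; rewrite mxE expr0n. Qed.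

Lemma mxtrace_orthogonal_conj m k (S : 'M[R]_(m, k)) U V :
  orthogonal U -> orthogonal V ->
  \tr ((U *m S *m V) *m (U *m S *m V)^T) = \tr (S *m S^T).
Proof.
move=> oU oV; rewrite !trmx_mul !mulmxA -(mulmxA _ V) oV mulmx1.
by rewrite -!mulmxA mxtrace_mulC -!mulmxA orthogonal_trmx_mul // mulmx1.
Qed.

Lemma mxtrace_Sig_sqr m k p (pm : (p <= m)%N) (pk : (p <= k)%N) (sg : 'cV[R]_p) :
  \tr (Sig m k sg *m (Sig m k sg)^T) = \sum_(i < p) sg i 0 ^+ 2.
Proof.
rewrite Sig_pid !trmx_mul trmxK tr_diag_mx !mulmxA -(mulmxA _ (emb k p)^T).
rewrite tr_pid_mul_pid // mulmx1 -!mulmxA mxtrace_mulC -!mulmxA tr_pid_mul_pid //.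
rewrite mulmx1 mulmx_diag mxtrace_diag.
by apply: eq_bigr => i _; rewrite !mxE expr2.
Qed.

Lemma mxtrace_Sig_mul m k p (pm : (p <= m)%N) (pk : (p <= k)%N) (sg sg' : 'cV[R]_p)
    (U U' : 'M[R]_m) (V V' : 'M[R]_k) :
  let Y := mxsub (widen_ord pk) (widen_ord pk) (V *m V'^T) in
  let W := mxsub (widen_ord pm) (widen_ord pm) (U'^T *m U) in
  \tr ((U *m Sig m k sg *m V) *m (U' *m Sig m k sg' *m V')^T) =
  \sum_(i < p) \sum_(j < p) sg i 0 * Y i j * sg' j 0 * W j i.
Proof.
move=> Y W.
have -> : \tr ((U *m Sig m k sg *m V) *m (U' *m Sig m k sg' *m V')^T) =
  \tr (diag_mx sg^T *m ((emb k p)^T *m (V *m V'^T) *m emb k p) *m diag_mx sg'^T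
        *m ((emb m p)^T *m (U'^T *m U) *m emb m p)).
  rewrite !Sig_pid !trmx_mul !trmxK !tr_diag_mx.
  by rewrite -!mulmxA mxtrace_mulC -!mulmxA mxtrace_mulC !mulmxA.
have YE i j : ((emb k p)^T *m (V *m V'^T) *m emb k p) i j = Y i j.
  by rewrite (mulmx_pidE pk) tr_pid_mulmxE /Y [RHS]mxE.
have WE i j : ((emb m p)^T *m (U'^T *m U) *m emb m p) i j = W i j.
  by rewrite (mulmx_pidE pm) tr_pid_mulmxE /W [RHS]mxE.
rewrite /mxtrace; apply: eq_bigr => i _; rewrite mxE; apply: eq_bigr => j _.
by rewrite mul_mx_diag mxE mul_diag_mx mxE YE WE !mxE.
Qed.

(* von Neumann's trace inequality for two diagonals in orthogonal frames: the
   substochastic weights are the AM-GM bounds [(Y i j ^ 2 + W j i ^ 2) / 2]. *)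
Lemma mxtrace_Sig_mul_le m k p (pm : (p <= m)%N) (pk : (p <= k)%N)
    (sg sg' : 'cV[R]_p) (U U' : 'M[R]_m) (V V' : 'M[R]_k) :
  orthogonal U -> orthogonal U' -> orthogonal V -> orthogonal V' ->
  nonincr sg -> nonincr sg' -> (forall i, 0 <= sg i 0) -> (forall i, 0 <= sg' i 0) ->
  \tr ((U *m Sig m k sg *m V) *m (U' *m Sig m k sg' *m V')^T) <=
  \sum_(i < p) sg i 0 * sg' i 0.
Proof.
move=> oU oU' oV oV' sg_nonincr sg'_nonincr sg_ge0 sg'_ge0.
rewrite mxtrace_Sig_mul.
set Y := mxsub _ _ _; set W := mxsub _ _ _.
have oZ : orthogonal (V *m V'^T) by apply: orthogonalM => //; apply: orthogonal_tr.
have oX : orthogonal (U'^T *m U) by apply: orthogonalM => //; apply: orthogonal_tr.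
pose D i j := (extm Y i j ^+ 2 + extm W j i ^+ 2) / 2.
apply: le_trans (_ : _ <= \sum_(i < p) \sum_(j < p) extv sg i * extv sg' j * D i j) _.
  apply: ler_sum => i _; apply: ler_sum => j _; rewrite /D !extvE !extmE.
  have := mulr_ge0 (sg_ge0 i) (sg'_ge0 j); have := sqr_ge0 (Y i j - W j i); nra.
under [leRHS]eq_bigr do rewrite -!extvE.
apply: ler_sum_substochastic.
- exact: extv_nonincr.
- by move=> i _; apply: extv_ge0.
- exact: extv_nonincr.
- by move=> i _; apply: extv_ge0.
- by move=> i j; apply: divr_ge0 => //; apply: addr_ge0; apply: sqr_ge0.
- move=> i ip; rewrite /D -mulr_suml big_split /= -[i]/(val (Ordinal ip)).
  under eq_bigr do rewrite extmE; under [X in (_ + X) / _]eq_bigr do rewrite extmE.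
  have := orthogonal_sum_sqr_row_sub_le1 pk (Ordinal ip) oZ.
  have := orthogonal_sum_sqr_col_sub_le1 pm (Ordinal ip) oX.
  rewrite -/Y -/W; lra.
- move=> j jp; rewrite /D -mulr_suml big_split /= -[j]/(val (Ordinal jp)).
  under eq_bigr do rewrite extmE; under [X in (_ + X) / _]eq_bigr do rewrite extmE.
  have := orthogonal_sum_sqr_col_sub_le1 pk (Ordinal jp) oZ.
  have := orthogonal_sum_sqr_row_sub_le1 pm (Ordinal jp) oX.
  rewrite -/Y -/W; lra.
Qed.

Lemma mirsky_Sig m k p (pm : (p <= m)%N) (pk : (p <= k)%N) (sg sg' : 'cV[R]_p)
    (U U' : 'M[R]_m) (V V' : 'M[R]_k) :
  orthogonal U -> orthogonal U' -> orthogonal V -> orthogonal V' ->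
  nonincr sg -> nonincr sg' -> (forall i, 0 <= sg i 0) -> (forall i, 0 <= sg' i 0) ->
  \sum_(i < p) (sg i 0 - sg' i 0) ^+ 2 <=
  fro2 (U *m Sig m k sg *m V - U' *m Sig m k sg' *m V').
Proof.
move=> oU oU' oV oV' sg_nonincr sg'_nonincr sg_ge0 sg'_ge0.
have cross_le := mxtrace_Sig_mul_le pm pk oU oU' oV oV' sg_nonincr sg'_nonincr sg_ge0 sg'_ge0.
set A := U *m _ *m V in cross_le *; set B := U' *m _ *m V' in cross_le *.
have trBA : \tr (B *m A^T) = \tr (A *m B^T).
  by rewrite -[B *m A^T]trmxK trmx_mul trmxK mxtrace_tr.
rewrite fro2_mxtrace linearB /= mulmxBl !mulmxBr !raddfB /= trBA.
rewrite /A /B !mxtrace_orthogonal_conj // !mxtrace_Sig_sqr //.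
have -> : \sum_(i < p) (sg i 0 - sg' i 0) ^+ 2 = \sum_(i < p) sg i 0 ^+ 2
    + \sum_(i < p) sg' i 0 ^+ 2 - 2 * \sum_(i < p) sg i 0 * sg' i 0.
  by rewrite mulr_sumr -big_split -sumrB /=; apply: eq_bigr => i _; ring.
lra.
Qed.

End Mirsky.

Section SolutionSet.
Variable R : realType.

Lemma in_A_y_eq L k (lam : R) (y a a' : 'cV[R]_k) i j :
  0 < lam -> in_A L lam y a -> in_A L lam y a' ->
  a i 0 = a' j 0 -> 0 < a i 0 -> y i 0 = y j 0.
Proof.
move=> lam_gt0 /(_ i) [eq_a _] /(_ j) [eq_a' _] aa' a_gt0; rewrite -aa' in eq_a'.
set x := a i 0 in eq_a eq_a' a_gt0 *.
have : Num.sqrt lam * x ^+ L.-1 * (y i 0 - y j 0) = 0.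
  rewrite -[RHS](subrr 0) -{1}eq_a' -eq_a; ring.
by move/eqP; rewrite !mulf_eq0 subr_eq0 gt_eqF ?sqrtr_gt0 // gt_eqF ?exprn_gt0 //= => /eqP.
Qed.

Lemma in_BP L k (lam : R) (y sg : 'cV[R]_k) Pi : in_B L lam y sg Pi ->
  exists s : 'S_k, exists2 a, in_A L lam y a &
    Pi = perm_mx s /\ forall q, sg q 0 = a (s q) 0.
Proof.
move=> [/is_perm_mxP [s ->] [[a [a_in_A ->]] _]].
by exists s, a => //; split => // q; rewrite -row_permE mxE.
Qed.

Lemma in_B_orthogonal L k (lam : R) (y sg : 'cV[R]_k) Pi :
  in_B L lam y sg Pi -> orthogonal Pi.
Proof. by case/in_BP => s [a _ [-> _]]; apply: orthogonal_perm_mx. Qed.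

Lemma in_B_ge0 L k (lam : R) (y sg : 'cV[R]_k) Pi :
  in_B L lam y sg Pi -> forall i, 0 <= sg i 0.
Proof. by case/in_BP => s [a a_in_A [_ sgE]] i; rewrite sgE; case: (a_in_A (s i)). Qed.

Lemma in_B_Yset L k (lam : R) (y sg : 'cV[R]_k) Pi :
  in_B L lam y sg Pi -> forall i, Yset L lam y (sg i 0).
Proof.
case/in_BP => s [a a_in_A [_ sgE]] i; rewrite sgE.
by case: (a_in_A (s i)) => eq_a a_ge0; split => //; exists (s i); rewrite addrAC.
Qed.

(* A positive entry of sigma determines its y-label ([in_A_y_eq]), so the two
   labellings of sigma by y agree off its zeros and [perm_stab_relabel] matches
   them by a permutation fixing sigma. *)
Lemma in_B_conj_perm L k (lam : R) (y sg : 'cV[R]_k) Pi Pi' :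
  0 < lam -> in_B L lam y sg Pi -> in_B L lam y sg Pi' ->
  exists T : 'M[R]_k, [/\ orthogonal T,
    T *m diag_mx sg^T = diag_mx sg^T *m T &
    forall i l, (Pi'^T *m T^T *m Pi) i l != 0 -> y l 0 = y i 0].
Proof.
move=> lam_gt0 /in_BP [s [a a_in_A [-> sgE]]] /in_BP [s' [a' a'_in_A [-> sg'E]]].
have [tau tauE] : exists tau : 'S_k,
    forall q, sg (tau q) 0 = sg q 0 /\ y (s' (tau q)) 0 = y (s q) 0.
  apply: (perm_stab_relabel (sg := fun q => sg q 0) (z := 0) (F := fun i => y i 0))
    => q sg_neq0.
  have sg_gt0 : 0 < sg q 0 by rewrite lt_def sg_neq0 sgE; case: (a_in_A (s q)).
  by apply: (in_A_y_eq lam_gt0 a_in_A a'_in_A); rewrite -?sgE -?sg'E.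
exists (perm_mx tau); split; first exact: orthogonal_perm_mx.
  apply/matrixP => q r; rewrite mul_mx_diag mul_diag_mx !mxE.
  by have [<-|_] := eqVneq (tau q) r; rewrite ?mulr0 ?mul0r // (tauE q).1 mulrC.
move=> i l; rewrite !tr_perm_mx -!perm_mxM !mxE !permM.
have [<- _|] := eqVneq (s (tau^-1%g (s'^-1%g i))) l; last by rewrite eqxx.
by rewrite -(tauE _).2 !permKV.
Qed.

Lemma blkdiag_y_mul n k (y : 'cV[R]_k) (A B : 'M[R]_n) :
  blkdiag_y y A -> blkdiag_y y B -> blkdiag_y y (A *m B).
Proof.
move=> yA yB i j yij; rewrite mxE big1 // => l _.
have [yil|yil] := eqVneq (extv y i) (extv y l); last by rewrite yA ?mul0r.
by rewrite yB ?mulr0 // -yil.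
Qed.

Lemma blkdiag_y_extP n k (y : 'cV[R]_k) (G : 'M[R]_k) :
  (forall i l, G i l != 0 -> y l 0 = y i 0) -> blkdiag_y y (extP n G).
Proof.
move=> yG i j; rewrite /extv mxE.
case: (insubP _ (i : nat)) => [i' _ ii|ni]; case: (insubP _ (j : nat)) => [j' _ jj|nj] yij.
- by apply/eqP; apply: contraR yij => /yG ->.
- by case: eqP => // ij; move: nj; rewrite -ij -ii ltn_ord.
- by case: eqP => // ij; move: ni; rewrite ij -jj ltn_ord.
- by rewrite eqxx in yij.
Qed.

Lemma extP_mulmx_row n k (kn : (k <= n)%N) q (G : 'M[R]_k) (O : 'M[R]_(n, q))
    (i : 'I_n) (i' : 'I_k) j : (i : nat) = i' ->
  (extP n G *m O) i j = \sum_(l < k) G i' l * O (widen_ord kn l) j.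
Proof.
move=> ii'; rewrite extP_pid mulmxDl mulmxBl mul1mx -!mulmxA.
rewrite [LHS]mxE [X in _ + X]mxE [X in _ + (_ + X)]mxE !pid_mulmxE.
have -> : insub (i : nat) = Some i' by rewrite ii' valK.
rewrite tr_pid_mulmxE (_ : widen_ord kn i' = i); last exact: val_inj.
by rewrite subrr addr0 mxE; apply: eq_bigr => l _; rewrite tr_pid_mulmxE.
Qed.

End SolutionSet.

Section WsetTheory.
Variables (R : realType) (n : nat) (d : nat -> nat) (k : nat) (y : 'cV[R]_k).
Hypothesis k_le_d : forall l, (l <= n.+2)%N -> (k <= d l)%N.

(* Conjugating by [T], which commutes with [diag sigma], moves [Pi] to [Pi'];
   the discrepancy [G] is absorbed into the block-diagonal factors [O], [Oh]. *)
Lemma Wset_sub_conj (sg : 'cV[R]_k) (Pi Pi' T : 'M[R]_k) :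
  orthogonal Pi -> orthogonal Pi' -> orthogonal T ->
  T *m diag_mx sg^T = diag_mx sg^T *m T ->
  (forall i l, (Pi'^T *m T^T *m Pi) i l != 0 -> y l 0 = y i 0) ->
  @Wset R n d _ y sg Pi `<=` @Wset R n d _ y sg Pi'.
Proof.
move=> oPi oPi' oT TD yG W [Q [O [Oh [oQ [oO [oOh [yO [yOh [cpl W1 Wl WL]]]]]]]]].
set G := Pi'^T *m T^T *m Pi.
have oG : orthogonal G.
  by do 2?apply: orthogonalM => //; apply: orthogonal_tr.
have TtD : T^T *m diag_mx sg^T = diag_mx sg^T *m T^T.
  by rewrite -[diag_mx _]tr_diag_mx -!trmx_mul TD.
have k0 := k_le_d (leq0n n.+2); have kL := k_le_d (leqnn n.+2).
exists (fun m => Q m *m extP (d m) T), (extP (d 0) G *m O), (extP (d n.+2) G *m Oh).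
split.
  move=> m /andP [m1 mn]; apply: orthogonalM; first by apply: oQ; rewrite m1.
  by apply: extP_orth => //; apply: k_le_d; apply: leqW.
split; first by apply: orthogonalM => //; apply: extP_orth.
split; first by apply: orthogonalM => //; apply: extP_orth.
split; first by apply: blkdiag_y_mul => //; apply: blkdiag_y_extP.
split; first by apply: blkdiag_y_mul => //; apply: blkdiag_y_extP.
split.
- move=> i j i' j' ii' jj' y_gt0.
  have ik : (i < k)%N.
    move: y_gt0; rewrite /extv.
    by case: insubP => [u _ <- _|_]; [exact: ltn_ord | rewrite ltxx].
  rewrite (extP_mulmx_row k0 G O j (_ : (i : nat) = Ordinal ik)) //.
  rewrite (extP_mulmx_row kL G Oh j' (_ : (i' : nat) = Ordinal ik)) -?ii' //.
  apply: eq_bigr => l _; have [->|Gil] := eqVneq (G (Ordinal ik) l) 0; first by rewrite !mul0r.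
  by congr (_ * _); apply: cpl => //; rewrite extvE (yG _ _ Gil) -extvE.
- rewrite W1 -!mulmxA; congr (_ *m _).
  rewrite [RHS]mulmxA (extP_Sig (k_le_d (isT : 1 <= n.+2)%N) k0 TD) -mulmxA.
  congr (_ *m _); rewrite !mulmxA !extP_mul //; congr (extP _ _ *m _).
  by rewrite /G !mulmxA -(mulmxA T Pi') oPi' mulmx1 oT mul1mx.
- move=> l /andP [l_gt0 l_lt]; rewrite Wl ?l_gt0 // trmx_mul -!mulmxA.
  have kl : (k <= d l)%N by apply: k_le_d; rewrite (leq_trans (ltnW l_lt)).
  have kl1 : (k <= d l.+1)%N by apply: k_le_d.
  congr (_ *m _); rewrite [RHS]mulmxA (extP_Sig kl1 kl TD) -mulmxA.
  by congr (_ *m _); rewrite mulmxA (extP_orth kl oT) mul1mx.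
- rewrite WL !trmx_mul -!mulmxA; congr (_ *m _).
  have kn1 : (k <= d n.+1)%N by apply: k_le_d.
  rewrite !tr_extP [X in _ = _ *m (_ *m X)]mulmxA -(extP_Sig kL kn1 TtD).
  rewrite !mulmxA !extP_mul //; congr (extP _ _ *m _ *m _).
  by rewrite /G !trmx_mul !trmxK -!mulmxA (mulmxA Pi') oPi' mul1mx oT mulmx1.
Qed.

Lemma Wset_eq_of_in_B L (lam : R) (sg : 'cV[R]_k) Pi Pi' :
  0 < lam -> in_B L lam y sg Pi -> in_B L lam y sg Pi' ->
  @Wset R n d _ y sg Pi = @Wset R n d _ y sg Pi'.
Proof.
move=> lam_gt0 BPi BPi'; have oPi := in_B_orthogonal BPi.
have oPi' := in_B_orthogonal BPi'.
apply/seteqP; split.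
  have [T [oT TD yG]] := in_B_conj_perm lam_gt0 BPi BPi'.
  exact: (Wset_sub_conj oPi oPi' oT TD yG).
have [T [oT TD yG]] := in_B_conj_perm lam_gt0 BPi' BPi.
exact: (Wset_sub_conj oPi' oPi oT TD yG).
Qed.

Definition diag_point (sg : 'cV[R]_k) (Pi : 'M[R]_k) : Wtuple R n d :=
  fun l => (if (l : nat) == n.+1 then extP (d l.+1) Pi^T else 1%:M)
           *m Sig (d l.+1) (d l) sg *m (if (l : nat) == 0%N then extP (d l) Pi else 1%:M).

Lemma diag_point_in_Wset (sg : 'cV[R]_k) Pi : @Wset R n d _ y sg Pi (diag_point sg Pi).
Proof.
have blkdiag1 m : blkdiag_y y (1%:M : 'M[R]_m).
  by move=> i j yij; rewrite mxE; case: eqP => // ij; rewrite ij eqxx in yij.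
exists (fun _ => 1%:M), 1%:M, 1%:M.
split; first by move=> *; apply: orthogonal1.
do 2!(split; first exact: orthogonal1).
do 2!(split; first exact: blkdiag1).
split.
- move=> i j i' j' ii' jj' _; rewrite !mxE.
  by rewrite (_ : (i == j) = ((i : nat) == j)) // (_ : (i' == j') = ((i' : nat) == j')) // ii' jj'.
- by rewrite /diag_point /= mul1mx mulmx1.
- move=> l /andP [l_gt0 l_lt]; rewrite /diag_point trmx1 !mulmx1 mul1mx.
  by rewrite (ltn_eqF l_lt) (gtn_eqF l_gt0) mul1mx mulmx1.
- by rewrite /diag_point /= eqxx !trmx1 !mul1mx !mulmx1.
Qed.

Lemma Wset_fro2_ge L (lam : R) (sg sg' : 'cV[R]_k) Pi Pi' W W' :
  in_B L lam y sg Pi -> in_B L lam y sg' Pi' ->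
  @Wset R n d _ y sg Pi W -> @Wset R n d _ y sg' Pi' W' ->
  \sum_(i < k) (sg i 0 - sg' i 0) ^+ 2 <= fro2 (W ord0 - W' ord0).
Proof.
move=> BPi BPi' [Q [O [_ [oQ [oO [_ [_ [_ [_ W1 _ _]]]]]]]]]
  [Q' [O' [_ [oQ' [oO' [_ [_ [_ [_ W1' _ _]]]]]]]]].
have k0 := k_le_d (leq0n n.+2).
rewrite W1 W1' -!(mulmxA _ _ O) -!(mulmxA _ _ O').
apply: (mirsky_Sig (k_le_d (isT : 1 <= n.+2)%N) k0).
- exact: oQ.
- exact: oQ'.
- by apply: orthogonalM => //; apply: extP_orth => //; apply: in_B_orthogonal BPi.
- by apply: orthogonalM => //; apply: extP_orth => //; apply: in_B_orthogonal BPi'.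
- by case: BPi => _ [].
- by case: BPi' => _ [].
- exact: in_B_ge0 BPi.
- exact: in_B_ge0 BPi'.
Qed.

Lemma Wset_sqr_le_fro2 L (lam : R) (sg sg' : 'cV[R]_k) Pi Pi' W W' i :
  in_B L lam y sg Pi -> in_B L lam y sg' Pi' ->
  @Wset R n d _ y sg Pi W -> @Wset R n d _ y sg' Pi' W' ->
  (sg i 0 - sg' i 0) ^+ 2 <= fro2 (W ord0 - W' ord0).
Proof.
move=> BPi BPi' WW WW'; apply: le_trans (Wset_fro2_ge BPi BPi' WW WW').
by rewrite (bigD1 i) //= lerDl sumr_ge0 // => j _; apply: sqr_ge0.
Qed.

End WsetTheory.

Section Distance.
Variable R : realType.

Lemma delta_sigma_le L k (lam : R) (y : 'cV[R]_k) x z :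
  Yset L lam y x -> Yset L lam y z -> x != z -> delta_sigma L lam y <= `|x - z|.
Proof.
move=> Yx Yz xz; apply: ge_inf; last by exists x, z.
by exists 0 => _ [? [? [_ [_ [_ ->]]]]]; apply: normr_ge0.
Qed.

Lemma setdist_ge n d (X Y : set (Wtuple R n d)) c :
  X !=set0 -> Y !=set0 ->
  (forall W W', X W -> Y W' -> c <= wdist W W') -> c <= setdist X Y.
Proof.
move=> [W XW] [W' YW'] c_le; apply: lb_le_inf.
  by exists (wdist W W'), W; split => //; exists W'.
by move=> _ [V [XV [V' [YV' ->]]]]; apply: c_le.
Qed.

End Distance.

Theorem proposition3p3 (R : realType) (n : nat) (d : nat -> nat) (lam : R)
    (y sigma sigma' : 'cV[R]_(minn (d 0%N) (d n.+2)))
    (Pi Pi' : 'M[R]_(minn (d 0%N) (d n.+2))) :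
  (forall l : nat, (l <= n.+2)%N -> (0 < d l)%N) ->
  0 < lam ->
  nonincr y -> (forall i, 0 <= y i 0) ->
  (forall l : nat, (1 <= l <= n.+1)%N -> (minn (d 0%N) (d n.+2) <= d l)%N) ->
  in_B n.+2 lam y sigma Pi -> in_B n.+2 lam y sigma' Pi' ->
  (@Wset R n d _ y sigma Pi = @Wset R n d _ y sigma' Pi' <-> sigma = sigma') /\
  (sigma != sigma' ->
     delta_sigma n.+2 lam y <= setdist (@Wset R n d _ y sigma Pi) (@Wset R n d _ y sigma' Pi')).
Proof.
move=> _ lam_gt0 _ _ d_mid BPi BPi'.
have k_le_d l : (l <= n.+2)%N -> (minn (d 0%N) (d n.+2) <= d l)%N.
  case: l => [|l] l_le; first exact: geq_minl.
  move: l_le; rewrite leq_eqVlt => /orP [/eqP ->|l_lt]; first exact: geq_minr.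
  exact: d_mid.
have Pi_point := diag_point_in_Wset n d y sigma Pi.
split.
  split=> [eqW|eq_sg]; last first.
    rewrite -eq_sg in BPi' *; exact: (Wset_eq_of_in_B k_le_d lam_gt0 BPi BPi').
  have Pi_point' : @Wset R n d _ y sigma' Pi' (diag_point d sigma Pi) by rewrite -eqW.
  apply/matrixP => i j; rewrite ord1; apply/eqP; rewrite -subr_eq0 -sqrf_eq0.
  have := Wset_sqr_le_fro2 k_le_d i BPi BPi' Pi_point Pi_point'.
  by rewrite subrr fro2_0 eq_le sqr_ge0 andbT => ->.
move=> /col_neq [i neqi].
apply: le_trans (delta_sigma_le (in_B_Yset BPi i) (in_B_Yset BPi' i) neqi) _.
apply: setdist_ge; first by exists (diag_point d sigma Pi).
  by exists (diag_point d sigma' Pi'); apply: diag_point_in_Wset.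
move=> W W' WW WW'; rewrite /wdist -sqrtr_sqr ler_wsqrtr //.
apply: le_trans (Wset_sqr_le_fro2 k_le_d i BPi BPi' WW WW') _.
by rewrite (bigD1 ord0) //= lerDl sumr_ge0 // => l _; apply: fro2_ge0.
Qed.
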